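(* Let $\mathcal C$ be a Markov category with conditionals. Then every morphism in $\mathcal C$ has an initial dilation.
   Context: A Markov category is a symmetric monoidal category $(\mathcal C,\otimes,I)$ with commutative comonoids $\mathrm{copy}_X\colon X\to X\otimes X$, $\mathrm{del}_X\colon X\to I$ compatible with $\otimes$, with $I$ terminal. For $f\colon A\to X\otimes Y$ write $f_X=(\mathrm{id}_X\otimes\mathrm{del}_Y)\circ f$. A conditional of $f$ given $X$ is a morphism $f_{|X}\colon X\otimes A\to Y$ with $f=(\mathrm{id}_X\otimes f_{|X})\circ(\mathrm{copy}_X\otimes\mathrm{id}_A)\circ(f_X\otimes\mathrm{id}_A)\circ\mathrm{copy}_A$; $\mathcal C$ has conditionals if every such $f$ has a conditional. A dilation of $p\colon A\to X$ is $\pi\colon A\to X\otimes E$ with $(\mathrm{id}_X\otimes\mathrm{del}_E)\circ\pi=p$. For a dilation $\pi\colon A\to X\otimes E$ and $f_1,f_2\colon E\to E'$, these are $\pi$-dilationally equal if for every dilation $\rho\colon A\to X\otimes E\otimes F$ of $\pi$, $(\mathrm{id}_X\otimes f_1\otimes\mathrm{id}_F)\circ\rho=(\mathrm{id}_X\otimes f_2\otimes\mathrm{id}_F)\circ\rho$. A dilation $\pi\colon A\to X\otimes E$ of $p$ is initial if for every dilation $\pi'\colon A\to X\otimes E'$ of $p$ there is $f\colon E\to E'$ with $(\mathrm{id}_X\otimes f)\circ\pi=\pi'$, unique up to $\pi$-dilational equality. *)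

(* Equality of
   morphisms is Leibniz equality on hom-types. *)

Set Implicit Arguments.
Unset Strict Implicit.

Record MarkovCat := {
  ob : Type;
  hom : ob -> ob -> Type;
  comp : forall A B C : ob, hom B C -> hom A B -> hom A C;
  idm : forall A : ob, hom A A;
  comp_assoc : forall A B C D (h : hom C D) (g : hom B C) (f : hom A B),
      comp h (comp g f) = comp (comp h g) f;
  comp_id_l : forall A B (f : hom A B), comp (idm B) f = f;
  comp_id_r : forall A B (f : hom A B), comp f (idm A) = f;

  tens : ob -> ob -> ob;
  tensm : forall A B C D : ob, hom A B -> hom C D -> hom (tens A C) (tens B D);
  tensm_id : forall A B, tensm (idm A) (idm B) = idm (tens A B);
  tensm_comp : forall A B C A' B' C' (g : hom B C) (f : hom A B)
      (g' : hom B' C') (f' : hom A' B'),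
      tensm (comp g f) (comp g' f') = comp (tensm g g') (tensm f f');
  unit : ob;
  assoc : forall A B C, hom (tens (tens A B) C) (tens A (tens B C));
  assoc_inv : forall A B C, hom (tens A (tens B C)) (tens (tens A B) C);
  lunit : forall A, hom (tens unit A) A;
  lunit_inv : forall A, hom A (tens unit A);
  runit : forall A, hom (tens A unit) A;
  runit_inv : forall A, hom A (tens A unit);
  swap : forall A B, hom (tens A B) (tens B A);
  assoc_iso1 : forall A B C, comp (assoc A B C) (assoc_inv A B C) = idm _;
  assoc_iso2 : forall A B C, comp (assoc_inv A B C) (assoc A B C) = idm _;
  lunit_iso1 : forall A, comp (lunit A) (lunit_inv A) = idm _;
  lunit_iso2 : forall A, comp (lunit_inv A) (lunit A) = idm _;
  runit_iso1 : forall A, comp (runit A) (runit_inv A) = idm _;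
  runit_iso2 : forall A, comp (runit_inv A) (runit A) = idm _;
  assoc_nat : forall A A' B B' C C' (f : hom A A') (g : hom B B') (h : hom C C'),
      comp (assoc A' B' C') (tensm (tensm f g) h)
      = comp (tensm f (tensm g h)) (assoc A B C);
  lunit_nat : forall A A' (f : hom A A'),
      comp (lunit A') (tensm (idm unit) f) = comp f (lunit A);
  runit_nat : forall A A' (f : hom A A'),
      comp (runit A') (tensm f (idm unit)) = comp f (runit A);
  swap_nat : forall A A' B B' (f : hom A A') (g : hom B B'),
      comp (swap A' B') (tensm f g) = comp (tensm g f) (swap A B);
  pentagon : forall A B C D,
      comp (assoc A B (tens C D)) (assoc (tens A B) C D)
      = comp (tensm (idm A) (assoc B C D))
             (comp (assoc A (tens B C) D) (tensm (assoc A B C) (idm D)));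
  triangle : forall A B,
      comp (tensm (idm A) (lunit B)) (assoc A unit B) = tensm (runit A) (idm B);
  swap_invol : forall A B, comp (swap B A) (swap A B) = idm (tens A B);
  hexagon : forall A B C,
      comp (assoc B C A) (comp (swap A (tens B C)) (assoc A B C))
      = comp (tensm (idm B) (swap A C))
             (comp (assoc B A C) (tensm (swap A B) (idm C)));

  copy : forall X, hom X (tens X X);
  del : forall X, hom X unit;
  counit_l : forall X, comp (lunit X) (comp (tensm (del X) (idm X)) (copy X)) = idm X;
  counit_r : forall X, comp (runit X) (comp (tensm (idm X) (del X)) (copy X)) = idm X;
  coassoc : forall X,
      comp (assoc X X X) (comp (tensm (copy X) (idm X)) (copy X))
      = comp (tensm (idm X) (copy X)) (copy X);
  cocomm : forall X, comp (swap X X) (copy X) = copy X;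
  copy_tens : forall X Y,
      copy (tens X Y)
      = comp (assoc_inv X Y (tens X Y))
          (comp (tensm (idm X)
                   (comp (assoc Y X Y)
                      (comp (tensm (swap X Y) (idm Y)) (assoc_inv X Y Y))))
             (comp (assoc X X (tens Y Y)) (tensm (copy X) (copy Y))));
  del_tens : forall X Y, del (tens X Y) = comp (lunit unit) (tensm (del X) (del Y));
  copy_unit : copy unit = lunit_inv unit;
  del_unit : del unit = idm unit;
  unit_terminal : forall X (f : hom X unit), f = del X
}.

Arguments hom {m} _ _.
Arguments comp {m A B C} _ _.
Arguments idm {m} A.
Arguments tens {m} _ _.
Arguments tensm {m A B C D} _ _.
Arguments unit {m}.
Arguments assoc {m} A B C.
Arguments assoc_inv {m} A B C.
Arguments lunit {m} A.
Arguments lunit_inv {m} A.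
Arguments runit {m} A.
Arguments runit_inv {m} A.
Arguments swap {m} A B.
Arguments copy {m} X.
Arguments del {m} X.

Section Defs.
Variable C : MarkovCat.

Definition marg1 {A X Y : ob C} (f : hom A (tens X Y)) : hom A X :=
  comp (runit X) (comp (tensm (idm X) (del Y)) f).

Definition is_conditional {A X Y : ob C} (f : hom A (tens X Y))
    (g : hom (tens X A) Y) : Prop :=
  f = comp (tensm (idm X) g)
        (comp (assoc X X A)
           (comp (tensm (copy X) (idm A))
              (comp (tensm (marg1 f) (idm A)) (copy A)))).

Definition has_conditionals : Prop :=
  forall (A X Y : ob C) (f : hom A (tens X Y)),
    exists g : hom (tens X A) Y, is_conditional f g.

Definition is_dilation {A X E : ob C} (p : hom A X) (pi : hom A (tens X E)) : Prop :=
  marg1 pi = p.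

Definition dil_equal {A X E E' : ob C} (pi : hom A (tens X E))
    (f1 f2 : hom E E') : Prop :=
  forall (F : ob C) (rho : hom A (tens (tens X E) F)),
    is_dilation pi rho ->
    comp (tensm (tensm (idm X) f1) (idm F)) rho
    = comp (tensm (tensm (idm X) f2) (idm F)) rho.

Definition is_initial_dilation {A X E : ob C} (p : hom A X)
    (pi : hom A (tens X E)) : Prop :=
  is_dilation p pi /\
  forall (E' : ob C) (pi' : hom A (tens X E')), is_dilation p pi' ->
    (exists f : hom E E', comp (tensm (idm X) f) pi = pi') /\
    (forall f1 f2 : hom E E',
        comp (tensm (idm X) f1) pi = pi' ->
        comp (tensm (idm X) f2) pi = pi' ->
        dil_equal pi f1 f2).

End Defs.

(** The initial dilation of [p : A -> X] is [π = (copy_X ⊗ id_A) ∘ (p ⊗ id_A) ∘ copy_A]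
    (suitably reassociated), with environment [E = X ⊗ A]: it remembers a copy of the
    output together with the input.  A conditional [g : X ⊗ A -> E'] of any other
    dilation [π'] given [X] is exactly a factorisation [π' = (id_X ⊗ g) ∘ π].
    For uniqueness, let [ρ] be a dilation of [π] and condition it on its
    [X ⊗ X ⊗ A]-marginal, obtaining [h].  Then [(id_X ⊗ f ⊗ id_F) ∘ ρ] only sees [f]
    through [(id_X ⊗ f)] applied to one copy of the conditioning data, and that copy
    of the data can be rebuilt from [(id_X ⊗ f) ∘ π] and one more copy of the input
    (all copies of [x] agree, all copies of [a] agree).  Hence it only depends on
    [(id_X ⊗ f) ∘ π = π']. *)

Set Implicit Arguments.
Unset Strict Implicit.

Section MarkovCalculus.
Variable C : MarkovCat.
Local Notation "g ∘ f" := (comp g f) (at level 42, right associativity).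
Local Notation "f ⊗ g" := (tensm f g) (at level 35).

Ltac rassoc := repeat rewrite <- comp_assoc.

(* Lemmas suffixed [_k] state an equation [a ∘ b = c] in the form
   [a ∘ (b ∘ k) = c ∘ k], to rewrite inside right-associated composites. *)
Lemma comp_rewrite_k {B D E : ob C} (a : hom D E) (b : hom B D) (c : hom B E) :
  a ∘ b = c -> forall Z (k : hom Z B), a ∘ (b ∘ k) = c ∘ k.
Proof. intros H Z k. rewrite comp_assoc, H. reflexivity. Qed.

Lemma tensm_comp_l {A B D E : ob C} (g : hom B D) (f : hom A B) :
  (g ∘ f) ⊗ idm E = (g ⊗ idm E) ∘ (f ⊗ idm E).
Proof. rewrite <- tensm_comp, comp_id_l. reflexivity. Qed.

Lemma tensm_comp_r {A B D E : ob C} (g : hom B D) (f : hom A B) :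
  idm E ⊗ (g ∘ f) = (idm E ⊗ g) ∘ (idm E ⊗ f).
Proof. rewrite <- tensm_comp, comp_id_l. reflexivity. Qed.

Lemma tensm_comp_idl {A B D A' B' : ob C} (g : hom B D) (f : hom A B) (h : hom A' B') :
  (g ∘ f) ⊗ h = (g ⊗ h) ∘ (f ⊗ idm A').
Proof. rewrite <- tensm_comp, comp_id_r. reflexivity. Qed.

Lemma tensm_split_l {A B D E : ob C} (f : hom A B) (g : hom D E) :
  f ⊗ g = (f ⊗ idm E) ∘ (idm A ⊗ g).
Proof. rewrite <- tensm_comp, comp_id_l, comp_id_r. reflexivity. Qed.

Lemma tensm_split_r {A B D E : ob C} (f : hom A B) (g : hom D E) :
  f ⊗ g = (idm B ⊗ g) ∘ (f ⊗ idm D).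
Proof. rewrite <- tensm_comp, comp_id_l, comp_id_r. reflexivity. Qed.

Lemma tensm_interchange {A B D E : ob C} (f : hom A B) (g : hom D E) :
  (f ⊗ idm E) ∘ (idm A ⊗ g) = (idm B ⊗ g) ∘ (f ⊗ idm D).
Proof. rewrite <- tensm_split_l, <- tensm_split_r. reflexivity. Qed.

Lemma tensm_comp_k {A B D A' B' D' Z : ob C} (g : hom B D) (f : hom A B)
    (g' : hom B' D') (f' : hom A' B') (k : hom Z _) :
  (g ⊗ g') ∘ ((f ⊗ f') ∘ k) = ((g ∘ f) ⊗ (g' ∘ f')) ∘ k.
Proof. rewrite tensm_comp, comp_assoc. reflexivity. Qed.

Lemma tensm_comp_l_k {A B D E Z : ob C} (g : hom B D) (f : hom A B) (k : hom Z _) :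
  (g ⊗ idm E) ∘ ((f ⊗ idm E) ∘ k) = ((g ∘ f) ⊗ idm E) ∘ k.
Proof. rewrite tensm_comp_k, comp_id_l. reflexivity. Qed.

Lemma tensm_comp_r_k {A B D E Z : ob C} (g : hom B D) (f : hom A B) (k : hom Z _) :
  (idm E ⊗ g) ∘ ((idm E ⊗ f) ∘ k) = (idm E ⊗ (g ∘ f)) ∘ k.
Proof. rewrite tensm_comp_k, comp_id_l. reflexivity. Qed.

Lemma tensm_idm_l_k {A B Z : ob C} (f : hom A A) (k : hom Z _) :
  f = idm A -> (f ⊗ idm B) ∘ k = k.
Proof. intros ->. rewrite tensm_id, comp_id_l. reflexivity. Qed.

Lemma tensm_idm_r_k {A B Z : ob C} (f : hom A A) (k : hom Z _) :
  f = idm A -> (idm B ⊗ f) ∘ k = k.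
Proof. intros ->. rewrite tensm_id, comp_id_l. reflexivity. Qed.

Lemma assoc_assoc_inv_k {A B D Z : ob C} (k : hom Z _) :
  assoc A B D ∘ (assoc_inv A B D ∘ k) = k.
Proof. rewrite comp_assoc, assoc_iso1, comp_id_l. reflexivity. Qed.

Lemma assoc_inv_assoc_k {A B D Z : ob C} (k : hom Z _) :
  assoc_inv A B D ∘ (assoc A B D ∘ k) = k.
Proof. rewrite comp_assoc, assoc_iso2, comp_id_l. reflexivity. Qed.

Lemma assoc_inj {A B D Z : ob C} (x y : hom Z _) :
  assoc A B D ∘ x = assoc A B D ∘ y -> x = y.
Proof.
  intro H. rewrite <- (assoc_inv_assoc_k x), <- (assoc_inv_assoc_k y), H. reflexivity.
Qed.

Lemma assoc_nat_k {A A' B B' D D' Z : ob C} (f : hom A A') (g : hom B B') (h : hom D D')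
    (k : hom Z _) :
  assoc A' B' D' ∘ (((f ⊗ g) ⊗ h) ∘ k) = (f ⊗ (g ⊗ h)) ∘ (assoc A B D ∘ k).
Proof. rewrite !comp_assoc, assoc_nat. reflexivity. Qed.

Lemma assoc_nat_idl_k {A B D D' Z : ob C} (g : hom D D') (k : hom Z _) :
  assoc A B D' ∘ ((idm (tens A B) ⊗ g) ∘ k) = (idm A ⊗ (idm B ⊗ g)) ∘ (assoc A B D ∘ k).
Proof. rewrite <- tensm_id, assoc_nat_k. reflexivity. Qed.

Lemma assoc_inv_nat {A A' B B' D D' : ob C} (f : hom A A') (g : hom B B') (h : hom D D') :
  assoc_inv A' B' D' ∘ (f ⊗ (g ⊗ h)) = ((f ⊗ g) ⊗ h) ∘ assoc_inv A B D.
Proof.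
  apply assoc_inj. rewrite assoc_assoc_inv_k, assoc_nat_k, assoc_iso1, comp_id_r.
  reflexivity.
Qed.

Lemma assoc_inv_nat_k {A A' B B' D D' Z : ob C} (f : hom A A') (g : hom B B') (h : hom D D')
    (k : hom Z _) :
  assoc_inv A' B' D' ∘ ((f ⊗ (g ⊗ h)) ∘ k) = ((f ⊗ g) ⊗ h) ∘ (assoc_inv A B D ∘ k).
Proof. rewrite !comp_assoc, assoc_inv_nat. reflexivity. Qed.

Lemma pentagon_k {A B D E Z : ob C} (k : hom Z _) :
  assoc A B (tens D E) ∘ (assoc (tens A B) D E ∘ k)
  = (idm A ⊗ assoc B D E) ∘ (assoc A (tens B D) E ∘ ((assoc A B D ⊗ idm E) ∘ k)).
Proof. rewrite (comp_rewrite_k (pentagon _ _ _ _)). rassoc. reflexivity. Qed.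

Lemma pentagon_inner_k {A B D E Z : ob C} (k : hom Z _) :
  assoc A (tens B D) E ∘ ((assoc A B D ⊗ idm E) ∘ k)
  = (idm A ⊗ assoc_inv B D E) ∘ (assoc A B (tens D E) ∘ (assoc (tens A B) D E ∘ k)).
Proof. rewrite pentagon_k, tensm_comp_r_k, tensm_idm_r_k; [reflexivity | apply assoc_iso2]. Qed.

Lemma pentagon_outer {A B D E : ob C} :
  assoc (tens A B) D E ∘ (assoc_inv A B D ⊗ idm E)
  = assoc_inv A B (tens D E) ∘ ((idm A ⊗ assoc B D E) ∘ assoc A (tens B D) E).
Proof.
  apply assoc_inj. rewrite pentagon_k, <- tensm_comp_l, assoc_iso1, tensm_id, comp_id_r.
  rewrite assoc_assoc_inv_k. reflexivity.
Qed.

Lemma hexagon_swap {A B D : ob C} :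
  swap A (tens B D) ∘ assoc A B D
  = assoc_inv B D A ∘ ((idm B ⊗ swap A D) ∘ (assoc B A D ∘ (swap A B ⊗ idm D))).
Proof. rewrite <- hexagon, assoc_inv_assoc_k. reflexivity. Qed.

(* [(P ⊗ Q) ⊗ (R ⊗ S) -> (P ⊗ R) ⊗ (Q ⊗ S)], the rearrangement in axiom [copy_tens] *)
Definition middle_four (P Q R S : ob C) :
    hom (tens (tens P Q) (tens R S)) (tens (tens P R) (tens Q S)) :=
  assoc_inv P R (tens Q S)
  ∘ ((idm P ⊗ (assoc R Q S ∘ ((swap Q R ⊗ idm S) ∘ assoc_inv Q R S))) ∘ assoc P Q (tens R S)).

Definition swap23 (P Q R : ob C) : hom (tens (tens P Q) R) (tens (tens P R) Q) :=
  assoc_inv P R Q ∘ ((idm P ⊗ swap Q R) ∘ assoc P Q R).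

Lemma middle_four_nat {P Q R S P' Q' R' S' : ob C}
    (a : hom P P') (b : hom Q Q') (c : hom R R') (d : hom S S') :
  middle_four P' Q' R' S' ∘ ((a ⊗ b) ⊗ (c ⊗ d)) = ((a ⊗ c) ⊗ (b ⊗ d)) ∘ middle_four P Q R S.
Proof.
  unfold middle_four. rassoc. rewrite assoc_nat. rassoc. rewrite tensm_comp_k, comp_id_l. rassoc.
  rewrite assoc_inv_nat, tensm_comp_k, swap_nat, comp_id_l, tensm_comp_idl. rassoc.
  rewrite assoc_nat_k, <- (comp_id_r a), <- tensm_comp_k, assoc_inv_nat_k, comp_id_r.
  reflexivity.
Qed.

Lemma middle_four_nat_k {P Q R S P' Q' R' S' Z : ob C}
    (a : hom P P') (b : hom Q Q') (c : hom R R') (d : hom S S') (k : hom Z _) :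
  middle_four P' Q' R' S' ∘ (((a ⊗ b) ⊗ (c ⊗ d)) ∘ k)
  = ((a ⊗ c) ⊗ (b ⊗ d)) ∘ (middle_four P Q R S ∘ k).
Proof. rewrite !comp_assoc, middle_four_nat. reflexivity. Qed.

Lemma swap23_nat_k {P Q Q' R Z : ob C} (g : hom Q Q') (k : hom Z _) :
  swap23 P Q' R ∘ (((idm P ⊗ g) ⊗ idm R) ∘ k) = (idm (tens P R) ⊗ g) ∘ (swap23 P Q R ∘ k).
Proof.
  unfold swap23. rassoc. rewrite assoc_nat_k, tensm_comp_r_k, swap_nat, <- tensm_comp_r_k.
  rewrite assoc_inv_nat_k, tensm_id. reflexivity.
Qed.

Lemma middle_four_assoc_pentagon (P R S Q T Z : ob C) (k : hom Z _) :
  assoc_inv P (tens R S) (tens Q T)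
  ∘ ((idm P ⊗ assoc (tens R S) Q T)
  ∘ (assoc P (tens (tens R S) Q) T
  ∘ ((((idm P ⊗ assoc_inv R S Q) ∘ assoc P R (tens S Q)) ⊗ idm T) ∘ k)))
  = (assoc P R S ⊗ idm (tens Q T))
  ∘ (assoc_inv (tens P R) S (tens Q T)
  ∘ ((idm (tens P R) ⊗ assoc S Q T) ∘ (assoc (tens P R) (tens S Q) T ∘ k))).
Proof.
  apply assoc_inj. rewrite assoc_assoc_inv_k, pentagon_inner_k, assoc_assoc_inv_k.
  rewrite assoc_nat_idl_k, pentagon_k, !tensm_comp_r_k, tensm_comp_l. rassoc.
  rewrite assoc_nat_k, tensm_comp_r_k, pentagon_outer. rassoc. reflexivity.
Qed.

Lemma middle_four_assoc_hexagon (P Q R S : ob C) :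
  (idm P ⊗ (assoc_inv R S Q ∘ ((idm R ⊗ swap Q S) ∘ (assoc R Q S ∘ (swap Q R ⊗ idm S)))))
  ∘ (assoc P (tens Q R) S ∘ (assoc P Q R ⊗ idm S))
  = ((idm P ⊗ assoc_inv R S Q) ∘ assoc P R (tens S Q))
  ∘ ((idm (tens P R) ⊗ swap Q S) ∘ (assoc (tens P R) Q S ∘ (swap23 P Q R ⊗ idm S))).
Proof.
  unfold swap23. rassoc.
  rewrite assoc_nat_idl_k, tensm_comp_r_k, pentagon_k, tensm_comp_r_k, tensm_comp_l. rassoc.
  rewrite tensm_comp_l_k, tensm_idm_l_k by apply assoc_iso1.
  rewrite tensm_comp_l, assoc_nat_k, tensm_comp_r_k. rassoc. reflexivity.
Qed.

Lemma middle_four_swap23 (P Q R S T : ob C) :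
  (assoc P R S ⊗ idm (tens Q T))
  ∘ (middle_four (tens P R) Q S T ∘ (assoc (tens (tens P R) Q) S T ∘ ((swap23 P Q R ⊗ idm S) ⊗ idm T)))
  = middle_four P Q (tens R S) T ∘ (assoc (tens P Q) (tens R S) T ∘ (assoc (tens P Q) R S ⊗ idm T)).
Proof.
  unfold middle_four. rassoc.
  rewrite (pentagon_k (A:=P)), (tensm_comp_r_k (E:=P)). rassoc.
  rewrite assoc_iso2, comp_id_r, (tensm_comp_r (E:=P)). rassoc.
  rewrite <- (assoc_nat_k (idm P)), <- (tensm_comp_l (E:=T)), <- (tensm_comp_l (E:=T)).
  rewrite (pentagon P Q R S). rassoc. rewrite (tensm_comp_r_k (E:=P)), hexagon_swap.
  rewrite (pentagon_k (A:=tens P R)), (tensm_comp_r_k (E:=tens P R)). rassoc.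
  rewrite assoc_iso2, comp_id_r, (tensm_comp_r (E:=tens P R)). rassoc.
  rewrite <- (assoc_nat_k (idm (tens P R))), <- (tensm_comp_l (E:=T)), <- (tensm_comp_l (E:=T)).
  rewrite middle_four_assoc_hexagon.
  rewrite (tensm_comp_l ((idm P ⊗ assoc_inv R S Q) ∘ assoc P R (tens S Q))).
  rewrite middle_four_assoc_pentagon. reflexivity.
Qed.

Lemma middle_four_swap23_k (P Q R S T Z : ob C) (k : hom Z _) :
  (assoc P R S ⊗ idm (tens Q T))
  ∘ (middle_four (tens P R) Q S T
  ∘ (assoc (tens (tens P R) Q) S T ∘ (((swap23 P Q R ⊗ idm S) ⊗ idm T) ∘ k)))
  = middle_four P Q (tens R S) T
  ∘ (assoc (tens P Q) (tens R S) T ∘ ((assoc (tens P Q) R S ⊗ idm T) ∘ k)).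
Proof.
  rewrite !comp_assoc. f_equal.
  pose proof (middle_four_swap23 P Q R S T) as H. rassoc. rewrite H. rassoc. reflexivity.
Qed.

Lemma copy_tens_middle_four (X Y : ob C) :
  copy (tens X Y) = middle_four X X Y Y ∘ (copy X ⊗ copy Y).
Proof. rewrite copy_tens. unfold middle_four. rassoc. reflexivity. Qed.

Lemma coassoc_inv {X : ob C} :
  assoc_inv X X X ∘ ((idm X ⊗ copy X) ∘ copy X) = (copy X ⊗ idm X) ∘ copy X.
Proof. rewrite <- coassoc, assoc_inv_assoc_k. reflexivity. Qed.

Lemma copy_deterministic {X : ob C} :
  copy (tens X X) ∘ copy X = (copy X ⊗ copy X) ∘ copy X.
Proof.
  rewrite copy_tens_middle_four. unfold middle_four. rassoc.
  rewrite (tensm_split_r (copy X) (copy X)). rassoc.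
  rewrite assoc_nat_idl_k, coassoc, !tensm_comp_r_k. rassoc.
  rewrite coassoc_inv, tensm_comp_l_k, cocomm, coassoc, tensm_comp_r. rassoc.
  rewrite assoc_inv_nat_k, coassoc_inv, tensm_id, tensm_comp_k, comp_id_l, comp_id_r.
  reflexivity.
Qed.

Definition copy3 (X : ob C) : hom X (tens X (tens X X)) := (idm X ⊗ copy X) ∘ copy X.

Lemma copy_copy_swap23 {X : ob C} :
  (copy X ⊗ copy X) ∘ copy X = swap23 X (tens X X) X ∘ ((copy3 X ⊗ idm X) ∘ copy X).
Proof.
  unfold copy3. rewrite tensm_comp_l. rassoc. rewrite swap23_nat_k.
  unfold swap23. rassoc. rewrite coassoc, tensm_comp_r_k, cocomm, coassoc_inv.
  rewrite tensm_comp_k, comp_id_l, comp_id_r. reflexivity.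
Qed.

Lemma tensm_copy_coassoc {A Y : ob C} (y : hom A Y) :
  (y ⊗ copy A) ∘ copy A
  = assoc Y A A ∘ (((y ⊗ idm A) ⊗ idm A) ∘ ((copy A ⊗ idm A) ∘ copy A)).
Proof.
  rewrite tensm_split_l. rassoc. rewrite <- coassoc, <- tensm_id, assoc_nat_k. reflexivity.
Qed.

Lemma marg1_tensm_l {A W W' F : ob C} (u : hom W W') (r : hom A (tens W F)) :
  marg1 ((u ⊗ idm F) ∘ r) = u ∘ marg1 r.
Proof.
  unfold marg1. rewrite (comp_assoc (idm W' ⊗ del F)), <- tensm_interchange. rassoc.
  rewrite (comp_rewrite_k (runit_nat _)). rassoc. reflexivity.
Qed.

Lemma conditional_form_tensm_l {A M W F : ob C} (m : hom A M) (h : hom (tens M A) F)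
    (u : hom M W) :
  (u ⊗ idm F) ∘ ((idm M ⊗ h) ∘ (assoc M M A ∘ ((copy M ⊗ idm A) ∘ ((m ⊗ idm A) ∘ copy A))))
  = (idm W ⊗ h) ∘ (assoc W M A ∘ ((((u ⊗ idm M) ∘ (copy M ∘ m)) ⊗ idm A) ∘ copy A)).
Proof.
  rewrite comp_assoc, tensm_interchange. rassoc.
  rewrite <- (tensm_id M A), <- assoc_nat_k, !tensm_comp_l_k. rassoc. reflexivity.
Qed.

Section CanonicalDilation.
Variables (A X : ob C) (p : hom A X).

Definition graph_copy : hom A (tens (tens X X) A) :=
  (copy X ⊗ idm A) ∘ ((p ⊗ idm A) ∘ copy A).

Definition canonical_dilation : hom A (tens X (tens X A)) := assoc X X A ∘ graph_copy.

(* [((x, e), a) ↦ ((x, e), ((x, x), a))] *)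
Definition regenerate (E : ob C) : hom (tens (tens X E) A) (tens (tens X E) (tens (tens X X) A)) :=
  middle_four X (tens X X) E A ∘ (assoc (tens X (tens X X)) E A ∘ ((copy3 X ⊗ idm E) ⊗ idm A)).

(* Four copies of [p(a)] and three of [a], arranged as [((x, f(x, a)), ((x, x), a))]. *)
Definition copy_normal_form {E : ob C} (f : hom (tens X A) E) :
    hom A (tens (tens X E) (tens (tens X X) A)) :=
  ((idm X ⊗ f) ⊗ idm (tens (tens X X) A))
  ∘ (middle_four X (tens X X) (tens X A) A
  ∘ (assoc (tens X (tens X X)) (tens X A) A
  ∘ ((assoc (tens X (tens X X)) X A ⊗ idm A)
  ∘ (((((copy3 X ⊗ idm X) ∘ (copy X ∘ p)) ⊗ idm A) ⊗ idm A)
  ∘ ((copy A ⊗ idm A) ∘ copy A))))).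

Lemma canonical_dilation_is_dilation : is_dilation p canonical_dilation.
Proof.
  unfold is_dilation, marg1, canonical_dilation, graph_copy.
  rewrite del_tens, tensm_comp_r, <- comp_assoc, <- assoc_nat_k.
  rewrite (comp_rewrite_k (triangle _ _)), tensm_comp_k.
  rewrite (comp_rewrite_k (eq_sym (tensm_comp _ _ _ _))), comp_id_r, comp_id_l.
  rewrite <- (comp_assoc (runit X)), counit_r, tensm_comp_k, comp_id_l, comp_id_r.
  rewrite tensm_split_l, <- comp_assoc, (comp_rewrite_k (runit_nat _)), <- comp_assoc.
  rewrite counit_r, comp_id_r. reflexivity.
Qed.

Lemma copy_graph_copy_normal_form {E : ob C} (f : hom (tens X A) E) :
  (((idm X ⊗ f) ∘ assoc X X A) ⊗ idm (tens (tens X X) A)) ∘ (copy (tens (tens X X) A) ∘ graph_copy)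
  = copy_normal_form f.
Proof.
  unfold graph_copy, copy_normal_form. rewrite (copy_tens_middle_four (tens X X) A). rassoc.
  rewrite tensm_comp_k, comp_id_r, copy_deterministic, copy_copy_swap23, tensm_comp_k.
  rewrite comp_id_r, tensm_copy_coassoc, tensm_comp_l. rassoc.
  rewrite !tensm_comp_l. rassoc. rewrite middle_four_swap23_k. reflexivity.
Qed.

Lemma regenerate_normal_form {E : ob C} (f : hom (tens X A) E) :
  regenerate E ∘ ((((idm X ⊗ f) ∘ canonical_dilation) ⊗ idm A) ∘ copy A) = copy_normal_form f.
Proof.
  unfold regenerate, canonical_dilation, graph_copy, copy_normal_form. rassoc.
  rewrite !tensm_comp_l. rassoc.
  rewrite (tensm_comp_l_k (copy3 X ⊗ idm E)), tensm_interchange, (tensm_comp_l (idm _ ⊗ f)).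
  rassoc. rewrite assoc_nat_k, <- (tensm_id X (tens X X)), middle_four_nat_k, !tensm_id.
  rewrite (tensm_comp_l_k (copy3 X ⊗ idm (tens X A))), <- (tensm_id X A), <- assoc_nat.
  rewrite tensm_comp_l. rassoc. reflexivity.
Qed.

Lemma copy_graph_copy_factor {E : ob C} (f : hom (tens X A) E) :
  (((idm X ⊗ f) ∘ assoc X X A) ⊗ idm (tens (tens X X) A)) ∘ (copy (tens (tens X X) A) ∘ graph_copy)
  = regenerate E ∘ ((((idm X ⊗ f) ∘ canonical_dilation) ⊗ idm A) ∘ copy A).
Proof. rewrite copy_graph_copy_normal_form, regenerate_normal_form. reflexivity. Qed.

Lemma conditional_factors_canonical_dilation {E : ob C} (pi : hom A (tens X E))
    (g : hom (tens X A) E) :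
  is_dilation p pi -> is_conditional pi g -> (idm X ⊗ g) ∘ canonical_dilation = pi.
Proof.
  unfold is_dilation, is_conditional, canonical_dilation, graph_copy.
  intros Hpi Hg. rewrite <- Hpi. symmetry. exact Hg.
Qed.

Lemma canonical_dilation_dil_equal {E : ob C} (f1 f2 : hom (tens X A) E) :
  has_conditionals C ->
  (idm X ⊗ f1) ∘ canonical_dilation = (idm X ⊗ f2) ∘ canonical_dilation ->
  dil_equal canonical_dilation f1 f2.
Proof.
  intros Hcond Hf F rho Hrho.
  set (rho' := (assoc_inv X X A ⊗ idm F) ∘ rho).
  assert (Hrho' : rho = (assoc X X A ⊗ idm F) ∘ rho').
  { unfold rho'. rewrite tensm_comp_l_k, tensm_idm_l_k; [reflexivity | apply assoc_iso1]. }
  assert (Hmarg : marg1 rho' = graph_copy).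
  { unfold rho'. rewrite marg1_tensm_l, Hrho. apply assoc_inv_assoc_k. }
  destruct (Hcond _ _ _ rho') as [h Hh]. unfold is_conditional in Hh.
  rewrite Hmarg in Hh.
  rewrite Hrho', Hh, !(tensm_comp_l_k _ (assoc X X A)), !conditional_form_tensm_l.
  rewrite !copy_graph_copy_factor, Hf. reflexivity.
Qed.

End CanonicalDilation.

End MarkovCalculus.

Theorem proposition4p13 :
  forall (C : MarkovCat), has_conditionals C ->
  forall (A X : ob C) (p : hom A X),
    exists (E : ob C) (pi : hom A (tens X E)), is_initial_dilation p pi.
Proof.
  intros C Hcond A X p. exists (tens X A), (canonical_dilation p). split.
  - apply canonical_dilation_is_dilation.
  - intros E pi Hpi. split.
    + destruct (Hcond _ _ _ pi) as [g Hg]. exists g.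
      apply conditional_factors_canonical_dilation; assumption.
    + intros f1 f2 H1 H2. apply canonical_dilation_dil_equal; [assumption |].
      rewrite H1, H2. reflexivity.
Qed.
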